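(* Let $X$ be a non-empty set, $\overline X=X\cup X'$ and $\widetilde X=\overline X\cup\{(x\wedge y):x,y\in\overline X\}$. The relation $\widetilde\Theta(\mathcal{CS},X)=\{(u,v)\in\widetilde X^+\times\widetilde X^+:\overline u=\overline v\}$ on the free semigroup $\widetilde X^+$ equals the semigroup congruence on $\widetilde X^+$ generated by $\mathrm I\cup\Upsilon_3\cup\Upsilon_4\cup\Upsilon_5$, where $\mathrm I=\{(xx'x,x):x\in\overline X\}$, $\Upsilon_3=\{((x\wedge y)(x\wedge z),(x\wedge z)):x,y,z\in\overline X\}$, $\Upsilon_4=\{((z\wedge x)(y\wedge x),(z\wedge x)):x,y,z\in\overline X\}$, $\Upsilon_5=\{(x'x,(x'\wedge x)):x\in\overline X\}$.
   Context: $X'=\{x':x\in X\}$ is a set disjoint from $X$ in bijection with $X$ via $x\mapsto x'$; extend $'$ to $\overline X$ by $(x')'=x$. The free binary semigroup $F_2(\overline X)$ is the smallest set of nonempty words over $\overline X\cup\{(,\wedge,)\}$ containing $\overline X$ and closed under concatenation and under $(u,v)\mapsto(u\wedge v)$. The symbols $(x\wedge y)$, $x,y\in\overline X$, are treated as single letters of the alphabet $\widetilde X$, and $\widetilde X^+\subseteq F_2(\overline X)$. For a term $w$, $\iota w$ [$w\tau$] is the first [last] element of $\overline X$ in $w$. Reductions ($u,v$ terms, $x,y,z\in\overline X$): (R0) $(u\wedge v)\rightsquigarrow(\iota u\wedge v\tau)$; (R1) $x(y\wedge x)\rightsquigarrow x$; (R2) $(x\wedge y)x\rightsquigarrow x$;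 (R3) $(x\wedge y)(x\wedge z)\rightsquigarrow(x\wedge z)$; (R4) $(z\wedge x)(y\wedge x)\rightsquigarrow(z\wedge x)$; (R5) $x'x\rightsquigarrow(x'\wedge x)$, applied to segments. It is known (Auinger) that every term has a unique reduced form $\overline w$ (no reduction applicable) obtainable by finitely many reductions; moreover $\widetilde\Theta(\mathcal{CS},X)$ is a congruence on $\widetilde X^+$ whose quotient is the bifree completely simple semigroup on $X$, and a pair $(u,v)$ lies in it iff the bi-identity $u\,\hat=\,v$ holds in all completely simple semigroups. *)

From Stdlib Require Import List Relations.
Import ListNotations.
Set Implicit Arguments.

Section BifreeCS.
Variable X : Type.

(* \overline X = X ∪ X' ; Pos x = x, Neg x = x' *)
Inductive Xb : Type := Pos (x : X) | Neg (x : X).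
Definition prime (a : Xb) : Xb :=
  match a with Pos x => Neg x | Neg x => Pos x end.

(* Terms of F_2(\overline X): words (lists) of blocks; a block is a letter
   of \overline X or a wedge (u ∧ v) of two words. Only nonempty words arise. *)
Inductive blk : Type :=
| Let (a : Xb)
| Wdg (u v : list blk).

Fixpoint iota_b (b : blk) : option Xb :=
  match b with
  | Let a => Some a
  | Wdg u _ => match u with [] => None | b' :: _ => iota_b b' end
  end.
Fixpoint tau_b (b : blk) : option Xb :=
  match b with
  | Let a => Some a
  | Wdg _ v =>
      (fix lastb (l : list blk) : option Xb :=
         match l with
         | [] => None
         | [b'] => tau_b b'
         | _ :: l' => lastb l'
         end) v
  end.
Definition iota_w (w : list blk) : option Xb :=
  match w with [] => None | b :: _ => iota_b b end.
Definition tau_w (w : list blk) : option Xb :=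
  match rev w with [] => None | b :: _ => tau_b b end.

Definition wl (a b : Xb) : blk := Wdg [Let a] [Let b].

Inductive rule : list blk -> list blk -> Prop :=
| R1 x y : rule [Let x; wl y x] [Let x]
| R2 x y : rule [wl x y; Let x] [Let x]
| R3 x y z : rule [wl x y; wl x z] [wl x z]
| R4 x y z : rule [wl z x; wl y x] [wl z x]
| R5 x : rule [Let (prime x); Let x] [wl (prime x) x].

(* one reduction step, applied to a segment (possibly inside wedges);
   (R0) only counts as applicable when it changes the term *)
Inductive step : list blk -> list blk -> Prop :=
| st_rule p l r s : rule l r -> step (p ++ l ++ s) (p ++ r ++ s)
| st_R0 p u v a b s :
    iota_w u = Some a -> tau_w v = Some b -> (u, v) <> ([Let a], [Let b]) ->
    step (p ++ Wdg u v :: s) (p ++ wl a b :: s)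
| st_inL p u u' v s : step u u' -> step (p ++ Wdg u v :: s) (p ++ Wdg u' v :: s)
| st_inR p u v v' s : step v v' -> step (p ++ Wdg u v :: s) (p ++ Wdg u v' :: s).

Definition reduces : list blk -> list blk -> Prop := clos_refl_trans _ step.
Definition reduced (w : list blk) : Prop := forall w', ~ step w w'.
(* w is a reduced form of u (unique by Auinger) *)
Definition reduced_form (u w : list blk) : Prop := reduces u w /\ reduced w.

Inductive tletter : Type := TL (a : Xb) | TW (a b : Xb).
Definition emb_l (t : tletter) : blk :=
  match t with TL a => Let a | TW a b => wl a b end.
Definition emb (u : list tletter) : list blk := map emb_l u.

(* \widetilde Θ(CS,X) on \widetilde X^+ : same reduced form *)
Definition Theta (u v : list tletter) : Prop :=
  u <> [] /\ v <> [] /\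
  exists w, reduced_form (emb u) w /\ reduced_form (emb v) w.

Inductive gens : list tletter -> list tletter -> Prop :=
| G_I x : gens [TL x; TL (prime x); TL x] [TL x]
| G_U3 x y z : gens [TW x y; TW x z] [TW x z]
| G_U4 x y z : gens [TW z x; TW y x] [TW z x]
| G_U5 x : gens [TL (prime x); TL x] [TW (prime x) x].

Inductive cong : list tletter -> list tletter -> Prop :=
| c_gen p l r s : gens l r -> cong (p ++ l ++ s) (p ++ r ++ s)
| c_refl u : cong u u
| c_sym u v : cong u v -> cong v u
| c_trans u v w : cong u v -> cong v w -> cong u w.
End BifreeCS.

(* On words of \widetilde X^+ no reduction ever acts inside a wedge or via
   (R0): every wedge already has the form (a ∧ b) with a, b ∈ \overline X.
   Reduction of such words is therefore the string rewriting system with the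
   five rules [x y -> z] read off (R1)-(R5), which shortens words and whose
   overlapping rule pairs all join, so by Newman's lemma two words have the
   same reduced form iff they are convertible.  Convertibility coincides with
   the congruence generated by I ∪ Υ3 ∪ Υ4 ∪ Υ5: each generator is a composite
   of rewrites ([x x' x -> x (x' ∧ x) -> x]), and conversely
   [x (y ∧ x) = x x' x (y ∧ x) = x (x' ∧ x) (y ∧ x) = x (x' ∧ x) = x x' x = x]
   derives (R1) from the generators, and (R2) likewise. *)

From Stdlib Require Import List Relations Wf_nat Classical Lia.
Import ListNotations.
Set Implicit Arguments.

Section Newman.
Variables (A : Type) (R : relation A) (size : A -> nat).
Hypothesis R_size : forall x y, R x y -> size y < size x.

Definition irreducible (x : A) : Prop := forall y, ~ R x y.
Definition joinable (x y : A) : Prop :=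
  exists z, clos_refl_trans A R x z /\ clos_refl_trans A R y z.

Hypothesis R_locally_confluent :
  forall x y1 y2, R x y1 -> R x y2 -> joinable y1 y2.

Lemma normal_form_exists x : exists n, clos_refl_trans A R x n /\ irreducible n.
Proof.
  induction x as [x IH] using (well_founded_ind (well_founded_ltof A size)).
  destruct (classic (exists y, R x y)) as [[y Rxy] | Hirr].
  - destruct (IH y (R_size Rxy)) as [n [Ryn Hn]].
    exists n; split; [apply rt_trans with y; [apply rt_step |] |]; assumption.
  - exists x; split; [apply rt_refl |].
    intros y Rxy; apply Hirr; exists y; exact Rxy.
Qed.

Lemma normal_form_unique x n1 n2 :
  clos_refl_trans A R x n1 -> irreducible n1 ->
  clos_refl_trans A R x n2 -> irreducible n2 -> n1 = n2.
Proof.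
  revert n1 n2.
  induction x as [x IH] using (well_founded_ind (well_founded_ltof A size)).
  intros n1 n2 H1 Irr1 H2 Irr2.
  apply clos_rt_rt1n in H1; apply clos_rt_rt1n in H2.
  destruct H1 as [| x1 n1 Rx1 H1]; destruct H2 as [| x2 n2 Rx2 H2].
  - reflexivity.
  - exfalso; exact (Irr1 _ Rx2).
  - exfalso; exact (Irr2 _ Rx1).
  - apply clos_rt1n_rt in H1; apply clos_rt1n_rt in H2.
    destruct (R_locally_confluent Rx1 Rx2) as [z [Hz1 Hz2]].
    destruct (normal_form_exists z) as [n [Hzn Irr]].
    transitivity n.
    + apply (IH x1 (R_size Rx1)); try assumption.
      apply rt_trans with z; assumption.
    + symmetry; apply (IH x2 (R_size Rx2)); try assumption.
      apply rt_trans with z; assumption.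
Qed.

Lemma convertible_common_normal_form x y :
  clos_refl_sym_trans A R x y ->
  exists n, clos_refl_trans A R x n /\ clos_refl_trans A R y n /\ irreducible n.
Proof.
  induction 1 as [x y Rxy | x | x y _ IH | x y z _ IH1 _ IH2].
  - destruct (normal_form_exists y) as [n [Hyn Irr]].
    exists n; repeat split; try assumption.
    apply rt_trans with y; [apply rt_step |]; assumption.
  - destruct (normal_form_exists x) as [n [Hxn Irr]].
    exists n; repeat split; assumption.
  - destruct IH as [n [Hx [Hy Irr]]]; exists n; repeat split; assumption.
  - destruct IH1 as [n1 [Hx [Hy1 Irr1]]], IH2 as [n2 [Hy2 [Hz Irr2]]].
    rewrite (normal_form_unique Hy1 Irr1 Hy2 Irr2) in Hx.
    exists n2; repeat split; assumption.
Qed.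

End Newman.

Section Words.
Variable X : Type.
Notation T := (tletter X).

Lemma prime_involutive (a : Xb X) : prime (prime a) = a.
Proof. destruct a; reflexivity. Qed.

Inductive trule : T -> T -> T -> Prop :=
| T1 a b : trule (TL a) (TW b a) (TL a)
| T2 a b : trule (TW a b) (TL a) (TL a)
| T3 a b c : trule (TW a b) (TW a c) (TW a c)
| T4 a b c : trule (TW c a) (TW b a) (TW c a)
| T5 a : trule (TL (prime a)) (TL a) (TW (prime a) a).

Lemma T5_primed a : trule (TL a) (TL (prime a)) (TW a (prime a)).
Proof. generalize (T5 (prime a)); rewrite prime_involutive; trivial. Qed.

Inductive tstep : list T -> list T -> Prop :=
| ts_head x y z s : trule x y z -> tstep (x :: y :: s) (z :: s)
| ts_cons a u v : tstep u v -> tstep (a :: u) (a :: v).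

Notation tsteps := (clos_refl_trans (list T) tstep).

#[local] Hint Constructors trule tstep clos_refl_trans : tred.
#[local] Hint Resolve T5_primed : tred.

Lemma trule_functional x y z1 z2 : trule x y z1 -> trule x y z2 -> z1 = z2.
Proof. intros H1 H2; inversion H1; inversion H2; subst; congruence. Qed.

Lemma tstep_length u v : tstep u v -> length v < length u.
Proof. induction 1; simpl; lia. Qed.

Lemma tstep_app_l p u v : tstep u v -> tstep (p ++ u) (p ++ v).
Proof. induction p; simpl; auto with tred. Qed.

Lemma tstep_app_r u v s : tstep u v -> tstep (u ++ s) (v ++ s).
Proof. induction 1; simpl; auto with tred. Qed.

Lemma tsteps_app p u v s : tsteps u v -> tsteps (p ++ u ++ s) (p ++ v ++ s).
Proof.
  induction 1; eauto using tstep_app_l, tstep_app_r with tred.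
Qed.

Lemma tsteps_cons a u v : tsteps u v -> tsteps (a :: u) (a :: v).
Proof.
  intro H; generalize (tsteps_app [a] [] H); simpl; rewrite !app_nil_r; trivial.
Qed.

(* A two-letter word has at most one redex, so reducing both sides greedily
   reaches their common normal form. *)
Lemma trule_overlap_joinable x y w z1 z2 :
  trule x y z1 -> trule y w z2 -> joinable tstep [z1; w] [x; z2].
Proof.
  intros H1 H2; destruct H1; inversion H2; subst; rewrite ?prime_involutive in *;
  eexists; split;
  repeat (eapply rt_trans; [apply rt_step, ts_head; solve [eauto with tred] |]);
  apply rt_refl.
Qed.

Lemma head_step_joinable x y z s v :
  trule x y z -> tstep (x :: y :: s) v -> joinable tstep (z :: s) v.
Proof.
  intros Hr Hs; inversion Hs as [x' y' z' s' Hr' | a u v' Hs']; subst.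
  - rewrite (trule_functional Hr Hr'); exists (z' :: s); split; apply rt_refl.
  - inversion Hs' as [y' w z' s' Hr' | b u v'' Hs'']; subst.
    + destruct (trule_overlap_joinable Hr Hr') as [t [Ht1 Ht2]].
      exists (t ++ s'); split;
        [exact (tsteps_app [] s' Ht1) | exact (tsteps_app [] s' Ht2)].
    + exists (z :: v''); split; auto using tsteps_cons with tred.
Qed.

Lemma tstep_locally_confluent u v1 v2 :
  tstep u v1 -> tstep u v2 -> joinable tstep v1 v2.
Proof.
  intro H1; revert v2; induction H1 as [x y z s Hr | a u v1 H1 IH]; intros v2 H2.
  - exact (head_step_joinable Hr H2).
  - inversion H2 as [x y z s Hr | a' u' v2' H2']; subst.
    + destruct (head_step_joinable Hr (ts_cons a H1)) as [t [Ht1 Ht2]].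
      exists t; split; assumption.
    + destruct (IH _ H2') as [t [Ht1 Ht2]].
      exists (a :: t); split; apply tsteps_cons; assumption.
Qed.

Lemma emb_injective (u v : list T) : emb u = emb v -> u = v.
Proof.
  revert v; induction u as [| t u IH]; intros [| t' v] E; try discriminate; trivial.
  injection E as Et Eu; f_equal; [| exact (IH _ Eu)].
  destruct t, t'; simpl in Et; unfold wl in Et; congruence.
Qed.

Lemma rule_lhs_length (l r : list (blk X)) : rule l r -> length l = 2.
Proof. destruct 1; reflexivity. Qed.

Lemma rule_emb (t1 t2 : T) r :
  rule [emb_l t1; emb_l t2] r -> exists z, r = [emb_l z] /\ trule t1 t2 z.
Proof.
  intro H; inversion H; destruct t1, t2; simpl in *; try discriminate;
  repeat match goal with E : _ = _ |- _ => injection E as; subst end.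
  all: eexists; split; [| econstructor]; reflexivity.
Qed.

Lemma emb_wedge_split (u : list T) p u0 v0 s :
  emb u = p ++ Wdg u0 v0 :: s ->
  exists u1 a b u3, u = u1 ++ TW a b :: u3 /\ p = emb u1 /\ s = emb u3 /\
    u0 = [Let a] /\ v0 = [Let b].
Proof.
  intro E; apply map_eq_app in E as [u1 [u2 [-> [E1 E2]]]].
  apply map_eq_cons in E2 as [[a | a b] [u3 [-> [Et E3]]]]; try discriminate.
  injection Et as <- <-; exists u1, a, b, u3; repeat split; auto.
Qed.

Lemma letter_irreducible (a : Xb X) : reduced [Let a].
Proof.
  intros w H; inversion H as [p l r s Hr E | p u v a' b' s _ _ _ E
    | p u u' v s _ E | p u v v' s _ E]; clear H;
    [ apply (f_equal (@length _)) in E;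
      rewrite !length_app, (rule_lhs_length Hr) in E; simpl in E; lia
    | destruct p as [| ? []]; discriminate .. ].
Qed.

Lemma step_emb (u : list T) w :
  step (emb u) w -> exists u', w = emb u' /\ tstep u u'.
Proof.
  remember (emb u) as W eqn:E;
    destruct 1 as [p l r s Hr | p u0 v0 a b s Ha Hb Hne
                  | p u0 u0' v0 s Hs | p u0 v0 v0' s Hs]; symmetry in E.
  - apply map_eq_app in E as [u1 [u2 [-> [<- E]]]].
    apply map_eq_app in E as [u3 [u4 [-> [E <-]]]].
    assert (Hlen : length u3 = 2)
      by (rewrite <- (rule_lhs_length Hr), <- E; symmetry; apply length_map).
    destruct u3 as [| t1 [| t2 []]]; try discriminate; subst l.
    destruct (rule_emb _ _ Hr) as [z [-> Hz]].
    exists (u1 ++ z :: u4); split.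
    + unfold emb; rewrite map_app; reflexivity.
    + apply tstep_app_l; constructor; exact Hz.
  - apply emb_wedge_split in E as [u1 [a' [b' [u3 [_ [_ [_ [-> ->]]]]]]]].
    injection Ha as <-; injection Hb as <-; contradiction.
  - apply emb_wedge_split in E as [u1 [a' [b' [u3 [_ [_ [_ [-> _]]]]]]]].
    destruct (letter_irreducible Hs).
  - apply emb_wedge_split in E as [u1 [a' [b' [u3 [_ [_ [_ [_ ->]]]]]]]].
    destruct (letter_irreducible Hs).
Qed.

Lemma step_cons (b : blk X) w w' : step w w' -> step (b :: w) (b :: w').
Proof.
  destruct 1; [apply (st_rule (b :: p)) | apply (st_R0 (b :: p))
    | apply (st_inL (b :: p)) | apply (st_inR (b :: p))]; assumption.
Qed.

Lemma tstep_emb (u u' : list T) : tstep u u' -> step (emb u) (emb u').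
Proof.
  induction 1 as [x y z s Hr |]; simpl; [| apply step_cons; assumption].
  assert (Hrule : rule [emb_l x; emb_l y] [emb_l z]) by (destruct Hr; constructor).
  exact (st_rule [] (emb s) Hrule).
Qed.

Lemma reduces_emb (u : list T) w :
  reduces (emb u) w -> exists u', w = emb u' /\ tsteps u u'.
Proof.
  intro H; apply clos_rt_rt1n in H; remember (emb u) as W eqn:E; revert u E.
  induction H as [| W W1 w HW _ IH]; intros u ->.
  - exists u; split; [reflexivity | apply rt_refl].
  - destruct (step_emb _ HW) as [u1 [-> Hu1]].
    destruct (IH u1 eq_refl) as [u' [-> Hu']].
    exists u'; split; [reflexivity | apply rt_trans with u1; auto with tred].
Qed.

Lemma tsteps_reduces (u u' : list T) : tsteps u u' -> reduces (emb u) (emb u').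
Proof.
  induction 1; [apply rt_step, tstep_emb | apply rt_refl | eapply rt_trans];
  eassumption.
Qed.

Lemma irreducible_reduced (n : list T) : irreducible tstep n -> reduced (emb n).
Proof.
  intros Hn w Hw; destruct (step_emb _ Hw) as [n' [_ Hn']]; exact (Hn _ Hn').
Qed.

Lemma cong_app p s (u v : list T) : cong u v -> cong (p ++ u ++ s) (p ++ v ++ s).
Proof.
  induction 1 as [p0 l r s0 G | | |];
    [| apply c_refl | apply c_sym | eapply c_trans]; try eassumption.
  generalize (c_gen (p ++ p0) (s0 ++ s) G); rewrite <- !app_assoc; trivial.
Qed.

Lemma G_U5_primed (a : Xb X) : gens [TL a; TL (prime a)] [TW a (prime a)].
Proof. generalize (G_U5 (prime a)); rewrite prime_involutive; trivial. Qed.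

Ltac cong_fwd p s G := eapply c_trans; [exact (c_gen p s G) | simpl].
Ltac cong_bwd p s G := eapply c_trans; [exact (c_sym (c_gen p s G)) | simpl].

Lemma trule_cong x y z : trule x y z -> cong [x; y] [z].
Proof.
  destruct 1 as [a b | a b | a b c | a b c | a].
  - cong_bwd (@nil T) [TW b a] (G_I a).
    cong_fwd [TL a] [TW b a] (G_U5 a).
    cong_fwd [TL a] (@nil T) (G_U4 a b (prime a)).
    cong_bwd [TL a] (@nil T) (G_U5 a).
    exact (c_gen [] [] (G_I a)).
  - cong_bwd [TW a b] (@nil T) (G_I a).
    cong_fwd [TW a b] [TL a] (G_U5_primed a).
    cong_fwd (@nil T) [TL a] (G_U3 a b (prime a)).
    cong_bwd (@nil T) [TL a] (G_U5_primed a).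
    exact (c_gen [] [] (G_I a)).
  - exact (c_gen [] [] (G_U3 a b c)).
  - exact (c_gen [] [] (G_U4 a b c)).
  - exact (c_gen [] [] (G_U5 a)).
Qed.

Lemma tsteps_cong (u v : list T) : tsteps u v -> cong u v.
Proof.
  induction 1 as [u v H | | u v w _ IH1 _ IH2];
    [| apply c_refl | exact (c_trans IH1 IH2)].
  induction H as [x y z s Hr | a u v _ IH].
  - exact (cong_app [] s (trule_cong Hr)).
  - generalize (cong_app [a] [] IH); simpl; rewrite !app_nil_r; trivial.
Qed.

Lemma gens_tsteps (l r : list T) : gens l r -> tsteps l r.
Proof. destruct 1; eauto 6 with tred. Qed.

Lemma cong_convertible (u v : list T) :
  cong u v -> clos_refl_sym_trans (list T) tstep u v.
Proof.
  induction 1 as [p l r s G | | |]; eauto using rst_refl, rst_sym, rst_trans.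
  apply clos_rt_clos_rst, tsteps_app, gens_tsteps; exact G.
Qed.

End Words.

Theorem lemma2p7 (X : Type) (HX : inhabited X) (u v : list (tletter X)) :
  u <> [] -> v <> [] -> (@Theta X u v <-> @cong X u v).
Proof.
  intros Hu Hv; split.
  - intros [_ [_ [w [[Hreds_u _] [Hreds_v _]]]]].
    destruct (reduces_emb _ Hreds_u) as [u' [-> Hu']].
    destruct (reduces_emb _ Hreds_v) as [v' [Ew Hv']].
    rewrite (emb_injective _ _ Ew) in Hu'.
    exact (c_trans (tsteps_cong Hu') (c_sym (tsteps_cong Hv'))).
  - intro Hcong.
    destruct (convertible_common_normal_form (@length _) (@tstep_length X)
                (@tstep_locally_confluent X) (cong_convertible Hcong))
      as [n [Hun [Hvn Hn]]].
    repeat split; try assumption.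
    exists (emb n); repeat split; auto using tsteps_reduces, irreducible_reduced.
Qed.
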